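(* Let $n\ge1$. For every permutation $\sigma$ of $\{1,\ldots,n\}$ let $P(\sigma)$ be its set-size record, and define $\mathrm{stackit}(\sigma)=S(P(\sigma))$ and $\mathrm{queueit}(\sigma)=Q(P(\sigma))$. Then $\mathrm{stackit}\circ\mathrm{stackit}=\mathrm{stackit}$ and its image is exactly the set of $312$-avoiding permutations, on which it is the identity; $\mathrm{queueit}\circ\mathrm{queueit}=\mathrm{queueit}$ and its image is exactly the set of $321$-avoiding permutations, on which it is the identity. Moreover, the restriction of $\mathrm{queueit}$ to $312$-avoiding permutations is a bijection onto the $321$-avoiding permutations, whose inverse is the restriction of $\mathrm{stackit}$ to $321$-avoiding permutations.
   Context: A weak Dyck path is a word in steps $U=(1,1)$, $D=(1,-1)$, $H=(1,0)$ starting and ending at height $0$ and never below $0$; it is peakless if no $U$ is immediately followed by $D$. Set-size record $P(\sigma)$: input $1,\ldots,n$ in order, a set (from which any element may be removed) initially empty. For $k=1,\ldots,n$ in turn, to output $\sigma_k$: if $\sigma_k$ is in the set, remove it to the output (step $D$); otherwise insert input elements into the set (one step $U$ each) until $\sigma_k$ is the next input element, then transfer it directly to output (step $H$). $P(\sigma)$ is the resulting word, a peakless weak Dyck path with $n$ steps of type $U$ or $H$. For such a path $P$, $S(P)$ (resp. $Q(P)$) is the output obtained by executing $P$ with a stack (resp. queue): input $1,\ldots,n$ in order; $U$ moves the next input element to the top of the stack (resp. back of the queue), $D$ moves the top of the stack (resp. front of the queue) to the end of the output, $H$ moves the next input element directly to the end of the output. A permutation avoids $312$ (resp. $321$) if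 there are no $i<j<k$ with $p_j<p_k<p_i$ (resp. $p_i>p_j>p_k$). *)

From mathcomp Require Import all_boot.
Set Implicit Arguments. Unset Strict Implicit. Unset Printing Implicit Defensive.

Inductive step := U | D | H.

Definition is_perm (n : nat) (s : seq nat) : Prop := perm_eq s (iota 1 n).

(* To output x: if x is in the set, remove it (D); otherwise insert the input
   elements i, ..., x-1 (one U each) and transfer x directly (H). *)
Fixpoint ssr_aux (nxt : nat) (set : seq nat) (s : seq nat) : seq step :=
  match s with
  | [::] => [::]
  | x :: s' =>
      if x \in set then D :: ssr_aux nxt (rem x set) s'
      else nseq (x - nxt) U ++ H :: ssr_aux x.+1 (set ++ iota nxt (x - nxt)) s'
  end.

Definition setsize_record (s : seq nat) : seq step := ssr_aux 1 [::] s.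

Fixpoint run_stack (nxt : nat) (st : seq nat) (p : seq step) : seq nat :=
  match p with
  | [::] => [::]
  | U :: p' => run_stack nxt.+1 (nxt :: st) p'
  | D :: p' => match st with
               | [::] => run_stack nxt st p' (* never happens on Dyck paths *)
               | y :: st' => y :: run_stack nxt st' p'
               end
  | H :: p' => nxt :: run_stack nxt.+1 st p'
  end.

Fixpoint run_queue (nxt : nat) (q : seq nat) (p : seq step) : seq nat :=
  match p with
  | [::] => [::]
  | U :: p' => run_queue nxt.+1 (rcons q nxt) p'
  | D :: p' => match q with
               | [::] => run_queue nxt q p'
               | y :: q' => y :: run_queue nxt q' p'
               end
  | H :: p' => nxt :: run_queue nxt.+1 q p'
  end.

Definition S_exec (p : seq step) : seq nat := run_stack 1 [::] p.
Definition Q_exec (p : seq step) : seq nat := run_queue 1 [::] p.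

Definition stackit (s : seq nat) : seq nat := S_exec (setsize_record s).
Definition queueit (s : seq nat) : seq nat := Q_exec (setsize_record s).

Definition avoids312 (p : seq nat) : Prop :=
  ~ exists i j k, [/\ i < j, j < k, k < size p &
      (nth 0 p j < nth 0 p k) && (nth 0 p k < nth 0 p i)].

Definition avoids321 (p : seq nat) : Prop :=
  ~ exists i j k, [/\ i < j, j < k, k < size p &
      (nth 0 p i > nth 0 p j) && (nth 0 p j > nth 0 p k)].

From mathcomp Require Import all_boot zify.
Set Implicit Arguments. Unset Strict Implicit. Unset Printing Implicit Defensive.

(* Both stackit and queueit execute the set-size record of a permutation with
   a container that pops at its front and inserts each new input element
   somewhere; a stack inserts at the front, a queue at the back.  We work with
   such an abstract container [push] and prove, by induction along the
   record with the invariant "the remaining outputs are the set contents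
   followed by the pending input":
   - the output is again a permutation with the same set-size record
     (the container holds the same elements as the record's set);
   - if the container is kept sorted for an order r (decreasing for the stack,
     increasing for the queue), the output avoids the pattern "x, then two
     smaller entries in reversed r-order", which is 312 resp. 321;
   - a permutation avoiding that pattern is reproduced exactly.
   The theorem follows: an operator with these properties is an idempotent
   retraction onto the avoiders, and since stackit and queueit share the
   record, each undoes the other on the respective avoiders. *)

Lemma iota_split nxt k x : nxt <= x < nxt + k ->
  iota nxt k = iota nxt (x - nxt) ++ x :: iota x.+1 (k - (x - nxt)).-1.
Proof.
move=> /andP[lo hi].
have ek : k = (x - nxt) + (1 + (k - (x - nxt)).-1) by lia.
by rewrite {1}ek !iotaD subnKC //= addn1.
Qed.

Lemma perm_cons_rem (x : nat) s t : perm_eq (x :: s) t -> perm_eq s (rem x t).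
Proof.
move=> h; have xt : x \in t by rewrite -(perm_mem h) mem_head.
by rewrite -(perm_cons x) (perm_trans h) // perm_to_rem.
Qed.

(* Invariant of the set-size record: [perm_eq s (set ++ iota nxt k)] says the
   outputs still to come are the set contents and the pending inputs
   nxt, ..., nxt + k - 1.  A removal from the set preserves it ... *)
Lemma record_pop x s set nxt k : perm_eq (x :: s) (set ++ iota nxt k) ->
  x \in set -> perm_eq s (rem x set ++ iota nxt k).
Proof.
move=> hK xset; rewrite -(perm_cons x) (perm_trans hK) //.
by rewrite -cat_cons perm_cat2r perm_to_rem.
Qed.

Lemma record_insert x s set nxt k : perm_eq (x :: s) (set ++ iota nxt k) ->
  x \notin set -> [/\ nxt <= x, x < nxt + k &
  perm_eq s ((set ++ iota nxt (x - nxt)) ++ iota x.+1 (k - (x - nxt)).-1)].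
Proof.
move=> hK xset.
have : x \in set ++ iota nxt k by rewrite -(perm_mem hK) mem_head.
rewrite mem_cat (negbTE xset) mem_iota => /andP[lo hi]; split => //.
move: hK; rewrite (@iota_split nxt k x) ?lo ?hi // => /permP hK.
by apply/permP => a; move: (hK a); rewrite /= !count_cat /=; lia.
Qed.

Lemma record_nil set nxt k : perm_eq [::] (set ++ iota nxt k) -> set = [::] /\ k = 0.
Proof. by move/perm_size; rewrite size_cat size_iota; case: set; case: k. Qed.

Fixpoint avoiding (R : nat -> nat -> nat -> bool) (s : seq nat) : bool :=
  if s is x :: s' then pairwise (fun b c => ~~ R x b c) s' && avoiding R s'
  else true.

Lemma avoidingP R s : avoiding R s <-> ~ exists i j k,
  [/\ i < j, j < k, k < size s & R (nth 0 s i) (nth 0 s j) (nth 0 s k)].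
Proof.
elim: s => [|x s IH] /=; first by split => // _ [i [j [k []]]].
split.
- move=> /andP[/(pairwiseP 0) hx /IH hs] [[|i] [[|j] [[|k] [//= hij hjk hk hR]]]].
  + by move: hR; apply/negP; apply: hx; rewrite ?inE /=; lia.
  + by apply: hs; exists i, j, k.
- move=> hpat; apply/andP; split.
    apply/(pairwiseP 0) => j k hj hk hjk; apply/negP => hR.
    by apply: hpat; exists 0, j.+1, k.+1.
  apply/IH => -[i [j [k [hij hjk hk hR]]]].
  by apply: hpat; exists i.+1, j.+1, k.+1.
Qed.

(* The pattern x ... b ... c where b and c lie below x and appear in the
   order opposite to [r].  With r = gtn this is 312, with r = ltn it is 321. *)
Definition rpattern (r : rel nat) (x b c : nat) : bool := [&& b < x, c < x & r c b].

Lemma rpattern_filter r x s :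
  pairwise (fun b c => ~~ rpattern r x b c) s =
  pairwise (fun b c => ~~ r c b) [seq z <- s | z < x].
Proof.
elim: s => //= y s ->; case: ifP => hy /=.
  rewrite all_filter; congr (_ && _); apply: eq_all => z /=.
  by rewrite /rpattern hy; case: (z < x).
by rewrite (_ : all _ s = true) //; apply/allP => z _; rewrite /rpattern hy.
Qed.

Lemma avoids312E s : avoids312 s <-> avoiding (rpattern gtn) s.
Proof.
rewrite avoidingP /avoids312 /rpattern; split=> hav [i [j [k [hij hjk hk hR]]]];
  by apply: hav; exists i, j, k; split => //; move: hR; lia.
Qed.

Lemma avoids321E s : avoids321 s <-> avoiding (rpattern ltn) s.
Proof.
rewrite avoidingP /avoids321 /rpattern; split=> hav [i [j [k [hij hjk hk hR]]]];
  by apply: hav; exists i, j, k; split => //; move: hR; lia.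
Qed.

Section Container.

(* [push x l] inserts the new input element x into the container l; the
   front of l is the element popped by the next D step. *)
Variable push : nat -> seq nat -> seq nat.

Hypothesis push_insert :
  forall x l, exists l1 l2, l = l1 ++ l2 /\ push x l = l1 ++ x :: l2.

Fixpoint run (nxt : nat) (c : seq nat) (p : seq step) : seq nat :=
  match p with
  | [::] => [::]
  | U :: p' => run nxt.+1 (push nxt c) p'
  | D :: p' => if c is y :: c' then y :: run nxt c' p' else run nxt c p'
  | H :: p' => nxt :: run nxt.+1 c p'
  end.

Definition push_all (c s : seq nat) : seq nat := foldl (fun c x => push x c) c s.

Definition exec (s : seq nat) : seq nat := run 1 [::] (setsize_record s).

Lemma run_ups nxt c a p :
  run nxt c (nseq a U ++ p) = run (nxt + a) (push_all c (iota nxt a)) p.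
Proof.
elim: a nxt c => [|a IH] nxt c /=; first by rewrite addn0.
by rewrite IH addSnnS.
Qed.

Lemma run_insert nxt x c p : nxt <= x ->
  run nxt c (nseq (x - nxt) U ++ H :: p) =
  x :: run x.+1 (push_all c (iota nxt (x - nxt))) p.
Proof. by move=> le; rewrite run_ups subnKC. Qed.

Lemma push_perm x l : perm_eq (push x l) (x :: l).
Proof.
have [l1 [l2 [-> ->]]] := push_insert x l.
by rewrite -cat1s perm_catCA.
Qed.

Lemma push_all_perm c s : perm_eq (push_all c s) (c ++ s).
Proof.
elim: s c => [|x s IH] c /=; first by rewrite cats0.
rewrite (perm_trans (IH _)) //; apply/permP => a.
by rewrite !count_cat (permP (push_perm x c)) /= addnCA addnA.
Qed.

Lemma filter_push m x l : m <= x ->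
  [seq z <- push x l | z < m] = [seq z <- l | z < m].
Proof.
have [l1 [l2 [-> ->]]] := push_insert x l.
by rewrite !filter_cat /= ltnNge => ->.
Qed.

Lemma push_bound x l : all (fun z => z < x) l -> all (fun z => z < x.+1) (push x l).
Proof.
by rewrite (perm_all _ (push_perm _ _)) /= ltnSn; apply: sub_all => z; apply: ltnW.
Qed.

Lemma push_all_bound m c s :
  all (fun z => z < m) c -> all (fun z => z < m) s ->
  all (fun z => z < m) (push_all c s).
Proof. by rewrite (perm_all _ (push_all_perm c s)) all_cat => -> ->. Qed.

Lemma run_record_perm s nxt set k c :
  perm_eq s (set ++ iota nxt k) -> size c = size set ->
  perm_eq (run nxt c (ssr_aux nxt set s)) (c ++ iota nxt k).
Proof.
elim: s nxt set k c => [|x s IH] nxt set k c hK hsz /=.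
  by have [set0 ->] := record_nil hK; move: hsz; rewrite set0 => /size0nil ->.
case: ifP => xset.
  case: c hsz => [|y c] hsz; first by case: set hK xset hsz.
  by rewrite /= perm_cons IH ?(record_pop hK) // size_rem // -hsz.
have [lo hi hK'] := record_insert hK (negbT xset).
rewrite run_insert //; set c' := push_all _ _.
have /permP hc' := push_all_perm c (iota nxt (x - nxt)).
have /permP hrun : perm_eq (run x.+1 c' (ssr_aux x.+1 (set ++ iota nxt (x - nxt)) s))
                      (c' ++ iota x.+1 (k - (x - nxt)).-1).
  by apply: IH hK' _; rewrite (perm_size (push_all_perm _ _)) !size_cat hsz.
apply/permP => a; rewrite (@iota_split nxt k x) ?lo ?hi //= hrun.
by rewrite !count_cat hc' count_cat /=; lia.
Qed.

(* Taking the record of the output of such a run gives back the record: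
   the second record sees the container contents as its set. *)
Lemma run_record s nxt set k c set' :
  perm_eq s (set ++ iota nxt k) -> size c = size set -> perm_eq c set' ->
  all (fun z => z < nxt) c ->
  ssr_aux nxt set' (run nxt c (ssr_aux nxt set s)) = ssr_aux nxt set s.
Proof.
elim: s nxt set k c set' => [|x s IH] nxt set k c set' hK hsz hc hlt //=.
case: ifP => xset.
  case: c hsz hc hlt => [|y c] hsz hc hlt; first by case: set hK xset hsz.
  move: hlt => /andP[_ hlt]; rewrite /= -(perm_mem hc) mem_head; congr (D :: _).
  by rewrite (IH _ _ _ _ _ (record_pop hK xset)) ?size_rem ?perm_cons_rem // -hsz.
have [lo hi hK'] := record_insert hK (negbT xset).
have xc' : (x \in set') = false.
  by apply/negP; rewrite -(perm_mem hc) => /(allP hlt); lia.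
rewrite run_insert //= xc'; congr (_ ++ H :: _).
have hpush := push_all_perm c (iota nxt (x - nxt)).
apply: (IH _ _ _ _ _ hK').
- by rewrite (perm_size hpush) !size_cat hsz.
- by rewrite (perm_trans hpush) ?perm_cat2r.
- apply: push_all_bound; first by apply: sub_all hlt => z; lia.
  by apply/allP => z; rewrite mem_iota; lia.
Qed.

Lemma run_filter_subseq m nxt c p : m <= nxt ->
  subseq [seq z <- run nxt c p | z < m] [seq z <- c | z < m].
Proof.
elim: p nxt c => [|[] p IH] nxt c hm /=; first exact: sub0seq.
- by rewrite -(filter_push c hm); apply: IH; apply: leqW.
- case: c => [|y c]; first exact: IH.
  by rewrite /=; case: ifP => _; rewrite /= ?eqxx IH.
- by rewrite ltnNge hm /=; apply: IH; apply: leqW.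
Qed.

Lemma exec_perm n s : is_perm n s -> is_perm n (exec s).
Proof. by move=> hs; apply: (run_record_perm (set := [::]) (c := [::]) hs). Qed.

Lemma exec_record n s : is_perm n s -> setsize_record (exec s) = setsize_record s.
Proof. by move=> hs; apply: (run_record (set := [::]) (c := [::]) hs). Qed.

Section Ordered.

Variable r : rel nat.

Hypothesis r_asym : forall a b, r a b -> ~~ r b a.

Hypothesis push_sorted : forall x l,
  all (fun z => z < x) l -> pairwise r l -> pairwise r (push x l).

Lemma pairwise_rev_order s : pairwise r s -> pairwise (fun b c => ~~ r c b) s.
Proof. by apply: sub_pairwise => a b /r_asym. Qed.

Lemma push_all_sorted nxt a c : all (fun z => z < nxt) c -> pairwise r c ->
  pairwise r (push_all c (iota nxt a)).
Proof.
elim: a nxt c => [|a IH] nxt c hlt hc //=.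
by apply: IH; [apply: push_bound | apply: push_sorted].
Qed.

(* Every output of a run from an r-sorted container avoids the pattern:
   the entries below an output x that come later are popped in container
   order. *)
Lemma run_avoiding nxt c p : pairwise r c -> all (fun z => z < nxt) c ->
  avoiding (rpattern r) (run nxt c p).
Proof.
elim: p nxt c => [|[] p IH] nxt c hc hlt //.
- by apply: IH; [apply: push_sorted | apply: push_bound].
- case: c hc hlt => [|y c] hc hlt; first exact: IH.
  move: hc hlt; rewrite pairwise_cons => /andP[_ hc] /andP[hy hlt].
  rewrite /= IH // andbT rpattern_filter.
  apply: subseq_pairwise (run_filter_subseq c p (ltnW hy)) _.
  exact/pairwise_rev_order/pairwise_filter.
- rewrite /= IH ?andbT //; last by apply: sub_all hlt => z; lia.
  rewrite rpattern_filter; apply: subseq_pairwise (run_filter_subseq c p (leqnSn _)) _.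
  by rewrite (all_filterP hlt); apply: pairwise_rev_order.
Qed.

(* When the next output x was recorded by a pop, the front y of the
   container is x: otherwise x lies behind y, so r y x, while y is an
   entry below the bound after x, which the pattern-freeness forbids. *)
Lemma popped_front x t y c nxt : pairwise r (y :: c) -> x \in y :: c ->
  y \in x :: t -> y < nxt -> all (fun z => ~~ r z x) [seq z <- t | z < nxt] ->
  y = x.
Proof.
rewrite pairwise_cons in_cons => /andP[hy _] /orP[/eqP -> // | xc].
rewrite in_cons => /orP[/eqP // | yt] ylt /allP/(_ y).
by rewrite mem_filter ylt yt (allP hy x xc) => /(_ isT).
Qed.

Lemma run_record_fixed t nxt set k c :
  perm_eq t (set ++ iota nxt k) -> uniq t -> avoiding (rpattern r) t ->
  pairwise (fun b c => ~~ r c b) [seq z <- t | z < nxt] ->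
  pairwise r c -> all (fun z => z < nxt) c -> perm_eq set c ->
  run nxt c (ssr_aux nxt set t) = t.
Proof.
elim: t nxt set k c => [|x t IH] nxt set k c hK hu hav hlow hc hlt hset //=.
move: hu hav => /= /andP[xt hu] /andP[hx hav].
case: ifP => xset.
  have xc : x \in c by rewrite -(perm_mem hset).
  have xlt : x < nxt by apply: (allP hlt).
  case: c hc hlt hset xc => [|y c] // hc hlt hset xc.
  move: hlow; rewrite /= xlt pairwise_cons => /andP[hxlow hlow].
  have yx : y = x.
    apply: (popped_front hc xc _ (allP hlt y (mem_head _ _)) hxlow).
    by rewrite (perm_mem hK) mem_cat (perm_mem hset) mem_head.
  subst y; congr (_ :: _); move: hc hlt => /= /andP[_ hc] /andP[_ hlt].
  apply: IH (record_pop hK xset) hu hav hlow hc hlt _.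
  by rewrite perm_sym perm_cons_rem // perm_sym.
have [lo hi hK'] := record_insert hK (negbT xset).
rewrite run_insert //; congr (_ :: _); apply: (IH _ _ _ _ hK') => //.
- rewrite (@eq_in_filter _ _ (fun z => z < x)) -?rpattern_filter // => z zt /=.
  by rewrite ltnS leq_eqVlt; case: eqP => // zx; rewrite -zx zt in xt.
- exact: push_all_sorted.
- apply: push_all_bound; first by apply: sub_all hlt => z; lia.
  by apply/allP => z; rewrite mem_iota; lia.
- by rewrite perm_sym (perm_trans (push_all_perm _ _)) // perm_cat2r perm_sym.
Qed.

Lemma exec_avoiding s : avoiding (rpattern r) (exec s).
Proof. exact: run_avoiding. Qed.

Lemma exec_fixed n s : is_perm n s -> avoiding (rpattern r) s -> exec s = s.
Proof.
move=> hs hav; apply: (run_record_fixed (set := [::]) (c := [::]) hs) => //.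
  by rewrite (perm_uniq hs) iota_uniq.
rewrite (@eq_in_filter _ _ pred0) ?filter_pred0 // => z.
by rewrite (perm_mem hs) mem_iota; case: z.
Qed.

End Ordered.

End Container.

(* Running the record with two different containers: the second one only
   depends on the record, which the first one preserves. *)
Lemma exec_exec push push' n s :
  (forall x l, exists l1 l2, l = l1 ++ l2 /\ push x l = l1 ++ x :: l2) ->
  is_perm n s -> exec push' (exec push s) = exec push' s.
Proof. by move=> hpush hs; rewrite /exec (exec_record hpush hs). Qed.

Definition stack_push (x : nat) (l : seq nat) : seq nat := x :: l.

Lemma stack_insert x l : exists l1 l2, l = l1 ++ l2 /\ stack_push x l = l1 ++ x :: l2.
Proof. by exists [::], l. Qed.

Lemma stack_sorted x l : all (fun z => z < x) l -> pairwise gtn l ->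
  pairwise gtn (stack_push x l).
Proof. by rewrite /stack_push pairwise_cons => -> ->. Qed.

Lemma stackitE s : stackit s = exec stack_push s.
Proof. by []. Qed.

Definition queue_push (x : nat) (l : seq nat) : seq nat := rcons l x.

Lemma queue_insert x l : exists l1 l2, l = l1 ++ l2 /\ queue_push x l = l1 ++ x :: l2.
Proof. by exists l, [::]; rewrite cats0 /queue_push cats1. Qed.

Lemma queue_sorted x l : all (fun z => z < x) l -> pairwise ltn l ->
  pairwise ltn (queue_push x l).
Proof. by rewrite /queue_push pairwise_rcons => -> ->. Qed.

Lemma queueitE s : queueit s = exec queue_push s.
Proof. by []. Qed.

Lemma gtn_asym a b : gtn a b -> ~~ gtn b a.
Proof. by move=> /= ab; rewrite -leqNgt ltnW. Qed.

Lemma ltn_asym a b : ltn a b -> ~~ ltn b a.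
Proof. by move=> /= ab; rewrite -leqNgt ltnW. Qed.

Lemma retraction (A P : seq nat -> Prop) (f : seq nat -> seq nat) :
  (forall s, A s -> A (f s)) -> (forall s, P (f s)) ->
  (forall s, A s -> P s -> f s = s) ->
  (forall s, A s -> f (f s) = f s) /\
  (forall t, (A t /\ P t) <-> exists s, A s /\ f s = t).
Proof.
move=> hA hP hfix; split=> [s hs | t]; first by apply: hfix; [apply: hA | apply: hP].
split=> [[ht hpt] | [s [hs <-]]]; first by exists t; split; last exact: hfix.
by split; [apply: hA | apply: hP].
Qed.

Lemma stackit_perm n s : is_perm n s -> is_perm n (stackit s).
Proof. by move=> hs; rewrite stackitE; exact (exec_perm stack_insert hs). Qed.

Lemma stackit_avoids s : avoids312 (stackit s).
Proof.
rewrite avoids312E stackitE.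
exact (exec_avoiding stack_insert gtn_asym stack_sorted s).
Qed.

Lemma stackit_fixed n t : is_perm n t -> avoids312 t -> stackit t = t.
Proof.
move=> ht; rewrite avoids312E stackitE.
exact (exec_fixed stack_insert stack_sorted ht).
Qed.

Lemma queueit_perm n s : is_perm n s -> is_perm n (queueit s).
Proof. by move=> hs; rewrite queueitE; exact (exec_perm queue_insert hs). Qed.

Lemma queueit_avoids s : avoids321 (queueit s).
Proof.
rewrite avoids321E queueitE.
exact (exec_avoiding queue_insert ltn_asym queue_sorted s).
Qed.

Lemma queueit_fixed n t : is_perm n t -> avoids321 t -> queueit t = t.
Proof.
move=> ht; rewrite avoids321E queueitE.
exact (exec_fixed queue_insert queue_sorted ht).
Qed.

(* stackit and queueit see the same record, so each forgets the other. *)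
Lemma stackit_queueit n s : is_perm n s -> stackit (queueit s) = stackit s.
Proof. by move=> hs; rewrite queueitE stackitE (exec_exec _ queue_insert hs). Qed.

Lemma queueit_stackit n s : is_perm n s -> queueit (stackit s) = queueit s.
Proof. by move=> hs; rewrite stackitE queueitE (exec_exec _ stack_insert hs). Qed.

Theorem mainTheorem6 (n : nat) (hn : 1 <= n) :
  (* stackit *)
  (forall s, is_perm n s -> stackit (stackit s) = stackit s) /\
  (forall t, (is_perm n t /\ avoids312 t) <->
             exists s, is_perm n s /\ stackit s = t) /\
  (forall t, is_perm n t -> avoids312 t -> stackit t = t) /\
  (* queueit *)
  (forall s, is_perm n s -> queueit (queueit s) = queueit s) /\
  (forall t, (is_perm n t /\ avoids321 t) <->
             exists s, is_perm n s /\ queueit s = t) /\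
  (forall t, is_perm n t -> avoids321 t -> queueit t = t) /\
  (* bijection between 312-avoiders and 321-avoiders *)
  (forall s, is_perm n s -> avoids312 s ->
             is_perm n (queueit s) /\ avoids321 (queueit s)) /\
  (forall t, is_perm n t -> avoids321 t ->
             is_perm n (stackit t) /\ avoids312 (stackit t)) /\
  (forall s, is_perm n s -> avoids312 s -> stackit (queueit s) = s) /\
  (forall t, is_perm n t -> avoids321 t -> queueit (stackit t) = t).
Proof.
have [S_idem S_image] := retraction (@stackit_perm n) stackit_avoids (@stackit_fixed n).
have [Q_idem Q_image] := retraction (@queueit_perm n) queueit_avoids (@queueit_fixed n).
split; first exact: S_idem.
split; first exact: S_image.
split; first exact: stackit_fixed.
split; first exact: Q_idem.
split; first exact: Q_image.
split; first exact: queueit_fixed.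
split; first by move=> s hs _; split; [apply: queueit_perm hs | apply: queueit_avoids].
split; first by move=> t ht _; split; [apply: stackit_perm ht | apply: stackit_avoids].
split=> [s hs | t ht] hav.
- by rewrite (stackit_queueit hs) (stackit_fixed hs).
- by rewrite (queueit_stackit ht) (queueit_fixed ht).
Qed.
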